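(* Let $\mu\in\mathcal P_\varnothing(nl)$ have Frobenius form $(a_1,\dots,a_k\mid b_1,\dots,b_k)$. Then \[\mathrm{Eig}(\mu)=\sum_{i=1}^k\left(t^{e'_{b_i}}\sum_{j=1}^{\lceil b_i/l\rceil}t^{-(j-1)h}+t^{e''_{a_i}}\sum_{j=1}^{\lfloor(a_i+1)/l\rfloor}t^{(j-1)h}\right),\] where the subscripts of $e',e''$ are read modulo $l$.
   Context: Let $\mathbf h=(h,H_1,\dots,H_{l-1})\in\mathbb{Q}^l$ be a (generic) parameter and $H_0=-(H_1+\dots+H_{l-1})$. Let $\theta=(\theta_0,\dots,\theta_{l-1})=(-h+H_0,H_1,\dots,H_{l-1})$, with indices mod $l$; note $\sum_i\theta_i=-h$. Define $e'_0=-h$ and $e'_i=H_1+\dots+H_i$ for $1\le i\le l-1$. Define $e''_{l-1}=0$ and $e''_i=h+\sum_{j=1}^{l-i-1}H_j$ for $0\le i\le l-2$. $\mathcal P_\varnothing(nl)$ is the set of partitions of $nl$ with empty $l$-core. The Frobenius form has $a_i=\mu_i-i$ and $b_i=\mu^t_i-i$ for the diagonal cells $(i,i)$. For $m\ge1$ and $1\le r\le m$, let $A(m,r)$ be the $m\times m$ matrix with only nonzero entries $A(m,r)_{j+1,j}=\sum_{s=1}^j\theta_{r-s}$ for $1\le j<r$ and $A(m,r)_{j+1,j}=-\sum_{s=0}^{m-j-1}\theta_{-m+r+s}$ for $r\le j\le m-1$. Let $\Lambda(m)$ be the matrix with ones at $(j,j+1)$. Then $\Lambda(m)A(m,r)=\mathrm{diag}(\alpha_1,\dots,\alpha_m)$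 with $\alpha_j=A(m,r)_{j+1,j}$ for $j<m$ and $\alpha_m=0$. For $\mu$ with $r_i=b_i+1$ and $m_i=a_i+b_i+1$, let $\alpha^{(i)}_j$ be these diagonal entries for $(m,r)=(m_i,r_i)$. Define the formal sum $\mathrm{Eig}(\mu,i)=\sum_{1\le j\le m_i,\ j\equiv r_i-1\ (\mathrm{mod}\ l)}t^{\alpha^{(i)}_j}$ and $\mathrm{Eig}(\mu)=\sum_{i=1}^k\mathrm{Eig}(\mu,i)$, a sum of monomials with rational exponents. *)

From mathcomp Require Import all_boot all_order all_algebra.
Set Implicit Arguments. Unset Strict Implicit. Unset Printing Implicit Defensive.
Import Order.TTheory GRing.Theory Num.Theory.

(* A partition is a nonincreasing list of positive parts; rows are 0-indexed:
   [part mu i] is the paper's mu_{i+1}. *)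
Definition is_partition (mu : seq nat) : bool :=
  sorted geq mu && all (fun x => 0 < x) mu.

Definition part (mu : seq nat) (i : nat) : nat := nth 0 mu i.

(* [border_strip l nu mu]: nu is contained in mu and the skew diagram mu/nu is
   an l-rim hook (border strip): its l cells occupy the consecutive rows
   p..q (0-indexed), and consecutive rows overlap in exactly one column
   (connected, no 2x2 square), i.e. mu_{i+1} = nu_i + 1 for p <= i < q. *)
Definition border_strip (l : nat) (nu mu : seq nat) : Prop :=
  exists p q : nat, [/\ p <= q,
    (forall i, i < p \/ q < i -> part nu i = part mu i),
    (forall i, p <= i <= q -> part nu i < part mu i),
    (forall i, p <= i < q -> part mu i.+1 = (part nu i).+1) &
    sumn mu = sumn nu + l].

(* Partitions with empty l-core: those reducible to the empty partition by
   successively removing l-rim hooks (equivalently, built from the empty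
   partition by successively adding l-rim hooks). *)
Inductive empty_core (l : nat) : seq nat -> Prop :=
| empty_core_nil : empty_core l [::]
| empty_core_add : forall nu mu : seq nat,
    empty_core l nu -> is_partition nu -> is_partition mu ->
    border_strip l nu mu -> empty_core l mu.

Definition conj_part (mu : seq nat) (i : nat) : nat := count (fun x => i <= x) mu.

Definition durfee (mu : seq nat) : nat :=
  count (fun d => d < part mu d) (iota 0 (size mu)).

(* For the 0-indexed diagonal cell d (the paper's i = d+1):
   a_i = mu_i - i,  b_i = mu^t_i - i. *)
Definition frob_a (mu : seq nat) (d : nat) : nat := part mu d - d.+1.
Definition frob_b (mu : seq nat) (d : nat) : nat := conj_part mu d.+1 - d.+1.

Local Open Scope ring_scope.

(* h : rat and H : nat -> rat, of which only H 1, ..., H (l-1) are used. *)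
Definition H0 (l : nat) (H : nat -> rat) : rat := - \sum_(1 <= i < l) H i.

Definition theta (l : nat) (h : rat) (H : nat -> rat) (s : int) : rat :=
  let i := (s %% (l%:Z))%Z in
  if i == 0 then - h + H0 l H else H (absz i).

Definition e' (l : nat) (h : rat) (H : nat -> rat) (i : nat) : rat :=
  if i == 0%N then - h else \sum_(1 <= j < i.+1) H j.

Definition e'' (l : nat) (h : rat) (H : nat -> rat) (i : nat) : rat :=
  if i == l.-1 then 0 else h + \sum_(1 <= j < (l - i - 1).+1) H j.

(* alpha_j for (m, r): the subdiagonal entry A(m,r)_{j+1,j} for j < m,
   and alpha_m = 0 (diagonal entries of Lambda(m) A(m,r)). *)
Definition alpha (l : nat) (h : rat) (H : nat -> rat) (m r j : nat) : rat :=
  if j == m then 0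
  else if (j < r)%N then \sum_(1 <= s < j.+1) theta l h H (r%:Z - s%:Z)
  else - \sum_(0 <= s < m - j) theta l h H (- m%:Z + r%:Z + s%:Z).

(* Formal sums of monomials t^q (q : rat) are represented as multisets of
   exponents, i.e. sequences of rationals compared up to permutation. *)
Definition Eig_i (l : nat) (h : rat) (H : nat -> rat) (mu : seq nat) (d : nat)
  : seq rat :=
  let a := frob_a mu d in let b := frob_b mu d in
  let m := (a + b + 1)%N in let r := b.+1 in
  [seq alpha l h H m r j | j <- iota 1 m & ((j %% l)%N == (r.-1 %% l)%N)].

Definition Eig (l : nat) (h : rat) (H : nat -> rat) (mu : seq nat) : seq rat :=
  flatten [seq Eig_i l h H mu d | d <- iota 0 (durfee mu)].

Definition Eig_rhs_i (l : nat) (h : rat) (H : nat -> rat) (mu : seq nat) (d : nat)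
  : seq rat :=
  let a := frob_a mu d in let b := frob_b mu d in
  [seq e' l h H (b %% l)%N - (j.-1)%:R * h | j <- iota 1 ((b + l - 1) %/ l)%N] ++
  [seq e'' l h H (a %% l)%N + (j.-1)%:R * h | j <- iota 1 ((a + 1) %/ l)%N].

Definition Eig_rhs (l : nat) (h : rat) (H : nat -> rat) (mu : seq nat) : seq rat :=
  flatten [seq Eig_rhs_i l h H mu d | d <- iota 0 (durfee mu)].

From mathcomp Require Import all_boot all_order all_algebra.
From mathcomp Require Import zify ring.
Import Order.TTheory GRing.Theory Num.Theory.

(** The entries alpha_j of A(m, r) are, up to sign, sums of windows of
    consecutive theta's: theta_{r-j}, ..., theta_{r-1} for j < r, and
    theta_{r-m}, ..., theta_{r-j-1} for j >= r.  As theta is l-periodic with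
    theta_0 + ... + theta_{l-1} = -h, a window of length q l + s sums to
    -q h plus the sum of its first s terms.  On the class j = r - 1 (mod l)
    that leftover window starts at residue 1 (for j < r) or ends at residue 0
    (for j >= r), and its sum is e'_{b mod l}, resp. -e''_{a mod l}, while q
    runs through 0, ..., ceil(b/l) - 1, resp. 0, ..., floor((a+1)/l) - 1.
    So the identity holds hook by hook for arbitrary arm and leg lengths. *)

Section ResidueClasses.

Variable l : nat.
Hypothesis l_gt0 : 0 < l.

Lemma filter_iota_modn x n d k : d < l -> n <= d + k * l < n + l ->
  perm_eq [seq j <- iota x n | j %% l == (x + d) %% l]
          [seq x + d + t * l | t <- iota 0 k].
Proof.
move=> d_lt_l /andP[n_le dk_lt]; apply: uniq_perm.
- by rewrite filter_uniq ?iota_uniq.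
- rewrite map_inj_uniq ?iota_uniq // => t u /eqP.
  by rewrite eqn_add2l eqn_pmul2r // => /eqP.
move=> j; rewrite mem_filter mem_iota; apply/andP/mapP => [[j_eq /andP[x_le j_lt]]|[t]].
- have jE : j - x = (j - x) %/ l * l + d.
    move: j_eq; rewrite -{1}(subnKC x_le) eqn_modDl (modn_small d_lt_l) => /eqP <-.
    exact: divn_eq.
  exists ((j - x) %/ l); last by lia.
  by rewrite mem_iota add0n /= -(ltn_pmul2r l_gt0); lia.
- rewrite mem_iota add0n => /= t_lt_k ->; rewrite [x + d + _]addnC modnMDl.
  split=> //; have : t.+1 * l <= k * l by rewrite leq_mul2r t_lt_k orbT.
  rewrite mulSn; lia.
Qed.

End ResidueClasses.

Lemma perm_iota_rev k : perm_eq [seq k.-1 - t | t <- iota 0 k] (iota 0 k).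
Proof.
apply: uniq_perm; rewrite ?iota_uniq //.
  by rewrite map_inj_in_uniq ?iota_uniq // => t u; rewrite !mem_iota; lia.
move=> t; rewrite mem_iota; apply/mapP/idP => [[u]|tk].
  by rewrite mem_iota => ? ->; lia.
by exists (k.-1 - t); rewrite ?mem_iota; lia.
Qed.

Local Open Scope ring_scope.

Section Theta.

Variables (l : nat) (h : rat) (H : nat -> rat).

Lemma theta_MDl (k x : int) : theta l h H (k * l%:Z + x) = theta l h H x.
Proof. by rewrite /theta modzMDl. Qed.

Lemma theta_nat (s : nat) : (0 < s < l)%N -> theta l h H s%:Z = H s.
Proof.
case/andP=> s_gt0 s_lt_l; rewrite /theta modz_nat modn_small //.
by case: s s_gt0 {s_lt_l}.
Qed.

Lemma theta0 : theta l h H 0 = - h + H0 l H.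
Proof. by rewrite /theta mod0z eqxx. Qed.

Definition theta_sum (x : int) (n : nat) : rat :=
  \sum_(0 <= s < n) theta l h H (x + s%:Z).

Lemma theta_sum0 x : theta_sum x 0 = 0.
Proof. by rewrite /theta_sum big_geq. Qed.

Lemma theta_sumD x n1 n2 :
  theta_sum x (n1 + n2) = theta_sum x n1 + theta_sum (x + n1%:Z) n2.
Proof.
rewrite /theta_sum (big_cat_nat (n := n1)) ?leq_addr //=.
rewrite -{2}(add0n n1) big_addn addKn; congr (_ + _).
by apply: eq_bigr => s _; rewrite PoszD addrA addrAC.
Qed.

Lemma theta_sum_MDl (k x : int) n : theta_sum (k * l%:Z + x) n = theta_sum x n.
Proof. by apply: eq_bigr => s _; rewrite -addrA theta_MDl. Qed.

Lemma alpha_lt m r j : (j < r <= m)%N ->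
  alpha l h H m r j = theta_sum (r%:Z - j%:Z) j.
Proof.
case/andP=> j_lt_r r_le_m; rewrite /alpha ifN_eq; last by lia.
rewrite j_lt_r big_add1 /= big_nat_rev; apply: eq_big_nat => s /andP[_ s_lt_j].
by congr theta; lia.
Qed.

Lemma alpha_ge m r j : (r <= j <= m)%N ->
  alpha l h H m r j = - theta_sum (- m%:Z + r%:Z) (m - j).
Proof.
case/andP=> r_le_j _; rewrite /alpha ltnNge r_le_j /=.
by case: eqP => [->|//]; rewrite subnn theta_sum0 oppr0.
Qed.

Hypothesis l_gt0 : (0 < l)%N.

Lemma theta_sum_period x : theta_sum x l = - h.
Proof.
have theta_sumS y : theta_sum (y + 1) l = theta_sum y l.
  have := theta_sumD y 1 l; rewrite addnC theta_sumD.
  rewrite -[y + l%:Z]addrC -[l%:Z]mul1r theta_sum_MDl [_ + theta_sum y 1]addrC.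
  by move/addrI.
suff -> : theta_sum x l = theta_sum 0 l.
  rewrite /theta_sum big_ltn // addr0 theta0 /H0.
  rewrite [X in _ + X](eq_big_nat _ _ (F2 := H)) ?subrK //.
  by move=> i i_bd; rewrite add0r theta_nat.
elim/int_rect: x => [//|n IH|n IH].
  by rewrite -IH -(theta_sumS n) -addn1 PoszD.
by rewrite -IH -(theta_sumS (- n.+1%:Z)); congr theta_sum; lia.
Qed.

Lemma theta_sum_periods t x n :
  theta_sum x (t * l + n) = theta_sum x n - t%:R * h.
Proof.
elim: t x => [|t IH] x; first by rewrite mul0n add0n mul0r subr0.
rewrite mulSn -addnA theta_sumD theta_sum_period IH.
by rewrite -[_ + l%:Z]addrC -[l%:Z]mul1r theta_sum_MDl -addn1 natrD; ring.
Qed.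

Lemma theta_sum1 i : (i < l)%N -> theta_sum 1 i = \sum_(1 <= j < i.+1) H j.
Proof.
move=> i_lt_l; rewrite /theta_sum big_add1; apply: eq_big_nat => j /andP[_ ji].
by rewrite addrC (_ : _ + 1 = j.+1%:Z) ?theta_nat //; lia.
Qed.

Lemma theta_sum_e' i : (0 < i <= l)%N -> theta_sum 1 i = e' l h H (i %% l).
Proof.
case/andP=> i_gt0; rewrite leq_eqVlt => /orP[/eqP->|i_lt_l].
  by rewrite modnn theta_sum_period.
by rewrite modn_small // /e' ifN_eq -?lt0n // theta_sum1.
Qed.

Lemma theta_sum_e'' s : (s < l)%N ->
  - theta_sum (1 - s%:Z) s = e'' l h H ((s + l.-1) %% l).
Proof.
case: s => [|s] s_lt_l.
  by rewrite theta_sum0 oppr0 add0n modn_small ?prednK // /e'' eqxx.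
rewrite (_ : s.+1 + l.-1 = s + l)%N; last by lia.
rewrite modnDr modn_small; last by lia.
rewrite /e'' ifN_eq; last by lia.
have := theta_sumD (1 - s.+1%:Z) s.+1 (l - s.+1).
rewrite subnKC 1?ltnW // theta_sum_period (_ : 1 - _ + _ = 1) ?theta_sum1; [|lia|lia].
rewrite (_ : (l - s.+1).+1 = (l - s - 1).+1); last by lia.
by move=> period_split; rewrite -[h]opprK period_split; ring.
Qed.

Lemma Eig_hook_lower a b :
  perm_eq [seq alpha l h H (a + b + 1) b.+1 j | j <- iota 1 b & (j %% l == b %% l)%N]
          [seq e' l h H (b %% l) - (j.-1)%:R * h | j <- iota 1 ((b + l - 1) %/ l)].
Proof.
(* 1 + d is the least positive j with j = b (mod l), and k = ceil(b/l). *)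
set k := ((b + l - 1) %/ l)%N; set d := ((b + l - 1) %% l)%N.
have bE : (b + l - 1 = k * l + d)%N := divn_eq _ _.
have d_lt_l : (d < l)%N := ltn_pmod _ l_gt0.
have -> : (b %% l = (1 + d) %% l)%N.
  by rewrite modnDmr (_ : 1 + _ = b + l)%N ?modnDr //; lia.
apply: perm_trans (perm_map _ (@filter_iota_modn l l_gt0 1 b d k d_lt_l _)) _; first lia.
rewrite -map_comp (iotaDl 1 0) -map_comp.
apply/permP => p; congr count; apply/eq_in_map => t.
rewrite mem_iota add0n => /andP[_ t_lt_k] /=; rewrite add0n alpha_lt; last by nia.
rewrite addnC theta_sum_periods -theta_sum_e' ?modnDmr; last by lia.
by rewrite (_ : b.+1%:Z - _ = (k.-1 - t)%:Z * l + 1) ?theta_sum_MDl //; nia.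
Qed.

Lemma Eig_hook_upper a b :
  perm_eq [seq alpha l h H (a + b + 1) b.+1 j
             | j <- iota (1 + b) (a + 1) & (j %% l == b %% l)%N]
          [seq e'' l h H (a %% l) + (j.-1)%:R * h | j <- iota 1 ((a + 1) %/ l)].
Proof.
set k := ((a + 1) %/ l)%N; set s := ((a + 1) %% l)%N.
have aE : (a + 1 = k * l + s)%N := divn_eq _ _.
have s_lt_l : (s < l)%N := ltn_pmod _ l_gt0.
have -> : (b %% l = (1 + b + l.-1) %% l)%N by rewrite addnAC add1n prednK // modnDl.
apply: perm_trans
  (perm_map _ (@filter_iota_modn l l_gt0 (1 + b) (a + 1) l.-1 k _ _)) _; [lia|lia|].
rewrite -map_comp (iotaDl 1 0) -map_comp.
(* A larger j leaves fewer full periods in its window: reverse the enumeration. *)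
apply: (perm_trans _ (perm_map _ (perm_iota_rev k))); rewrite -map_comp.
apply/permP => p; congr count; apply/eq_in_map => t.
rewrite mem_iota add0n => /andP[_ t_lt_k] /=; rewrite add0n alpha_ge; last by nia.
rewrite (_ : _ - _ = (k.-1 - t) * l + s)%N; last by nia.
rewrite theta_sum_periods opprB (_ : - _ + _ = - k%:Z * l + (1 - s%:Z)); last by lia.
by rewrite theta_sum_MDl theta_sum_e'' // modnDml -addnA add1n prednK // modnDr addrC.
Qed.

Lemma Eig_hook a b :
  perm_eq [seq alpha l h H (a + b + 1) b.+1 j | j <- iota 1 (a + b + 1) & (j %% l == b %% l)%N]
    ([seq e' l h H (b %% l) - (j.-1)%:R * h | j <- iota 1 ((b + l - 1) %/ l)] ++
     [seq e'' l h H (a %% l) + (j.-1)%:R * h | j <- iota 1 ((a + 1) %/ l)]).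
Proof.
have -> : iota 1 (a + b + 1) = iota 1 b ++ iota (1 + b) (a + 1).
  by rewrite -iotaD; congr iota; lia.
by rewrite filter_cat map_cat perm_cat ?Eig_hook_lower ?Eig_hook_upper.
Qed.

End Theta.

Theorem lemma6p16 (l n : nat) (h : rat) (H : nat -> rat) (mu : seq nat) :
  (0 < l)%N -> is_partition mu -> sumn mu = (n * l)%N -> empty_core l mu ->
  perm_eq (Eig l h H mu) (Eig_rhs l h H mu).
Proof.
move=> l_gt0 _ _ _; rewrite /Eig /Eig_rhs.
elim: (iota 0 (durfee mu)) => [|d ds IH] //=.
by rewrite perm_cat // Eig_hook.
Qed.
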